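(* Consider a mixed-integer program (the paper's neoadjuvant chance-constrained chemotherapy model) whose variables include effective concentrations $E_{d,s}$ ($d\in\mathcal{D}$, $s\in\{0,\dots,S\}$) and log cell populations $P^{(k)}_{q,s}$ ($q\in\mathcal{Q}$, $s\in\{0,\dots,S\}$, $k\in\{1,\dots,K\}$), and whose constraints include, for all $q,k$ and $s\in\{0,\dots,S-1\}$, $$P^{(k)}_{q,s+1}=P^{(k)}_{q,s}+h\Big(\Lambda\big(\ln N^{(k)}_{q,\infty}-P^{(k)}_{q,s}\big)-\sum_{d\in\mathcal{D}}\eta_{d,q}\exp\big(-\rho_{d,q}\,t(s)\big)E_{d,s}\Big),\qquad P^{(k)}_{q,0}=\ln N^{(k)}_{q,0},$$ where $h>0$, $\Lambda>0$, $\eta_{d,q}\ge 0$, $\rho_{d,q}$ are constants, $t(s)=sh$, and $N^{(k)}_{q,0},N^{(k)}_{q,\infty}>0$ are given scenario data (together with further constraints: linearization of $E_{d,s}=\max\{0,C_{d,s}-\beta_{d,\mathrm{eff}}\}$, discretized pharmacokinetics, chance constraints and operational constraints). Suppose $\Lambda h\le 1$. Let $(\mathbf{E}^{[1]},\mathbf{P}^{[1]})$ and $(\mathbf{E}^{[2]},\mathbf{P}^{[2]})$ be the corresponding components of two feasible solutions of this program, with $E^{[1]}_{d,s}\ge E^{[2]}_{d,s}$ for all $d\in\mathcal{D}$, $s\in\{0,\dots,S\}$. Then $P^{[1],(k)}_{q,S}\le P^{[2],(k)}_{q,S}$ for all $q\in\mathcal{Q}$ and $k\in\{1,\dots,K\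}$.
   Context: $\mathcal{D}$ is a finite set of drugs, $\mathcal{Q}$ a finite set of cancer cell types, and $k\in\{1,\dots,K\}$ indexes scenarios describing tumor heterogeneity (initial populations $N^{(k)}_{q,0}$ and limits $N^{(k)}_{q,\infty}$). $\eta_{d,q}\ge0$ is the fractional kill effect parameter of drug $d$ on cell type $q$ and $\rho_{d,q}$ the temporal resistance parameter. The planning horizon $[0,T]$ is discretized as $t(s)=sh$, $s=0,\dots,S$, $T=Sh$. *)

From mathcomp Require Import all_boot all_order all_algebra.
From mathcomp Require Import all_classical all_reals all_analysis.
Set Implicit Arguments. Unset Strict Implicit. Unset Printing Implicit Defensive.
Import Order.TTheory GRing.Theory Num.Theory.
Local Open Scope ring_scope.

Definition tgrid (R : realType) (h : R) (s : nat) : R := s%:R * h.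

(* Scenarios are indexed by 'I_K
   (i.e. k in {1..K} shifted to {0..K-1}). *)
Definition dynamics (R : realType) (D Q : finType) (K S : nat)
  (h Lam : R) (eta rho : D -> Q -> R) (N0 Ninf : 'I_K -> Q -> R)
  (E : D -> nat -> R) (P : 'I_K -> Q -> nat -> R) : Prop :=
  (forall k q, P k q 0%N = ln (N0 k q)) /\
  (forall k q s, (s < S)%N ->
     P k q s.+1 = P k q s + h * (Lam * (ln (Ninf k q) - P k q s)
                  - \sum_(d : D) eta d q * expR (- rho d q * tgrid h s) * E d s)).

From mathcomp Require Import all_boot all_order all_algebra.
From mathcomp Require Import all_classical all_reals all_analysis.
From mathcomp Require Import ring lra.
Import Order.TTheory GRing.Theory Num.Theory.
Local Open Scope ring_scope.

(* One explicit Euler step of the Gompertz-with-kill dynamics maps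
   P to (1 - Lam h) P + h (Lam ln N_inf - kill), which is nondecreasing in P
   when Lam h <= 1 and nonincreasing in the kill term, a nonnegative
   combination of the concentrations.  Starting from the same initial value,
   induction on s gives the comparison at every step up to S. *)

Lemma euler_step_le (R : realDomainType) (h Lam L a b u v : R) :
  0 <= h -> Lam * h <= 1 -> a <= b -> v <= u ->
  a + h * (Lam * (L - a) - u) <= b + h * (Lam * (L - b) - v).
Proof.
move=> h_ge0 Lamh_le1 le_ab le_vu.
have contraction : 0 <= (1 - Lam * h) * (b - a) by apply: mulr_ge0; lra.
have kill : 0 <= h * (u - v) by apply: mulr_ge0; lra.
have gap : b + h * (Lam * (L - b) - v) - (a + h * (Lam * (L - a) - u))
        = (1 - Lam * h) * (b - a) + h * (u - v) by ring.
by rewrite -subr_ge0 gap addr_ge0.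
Qed.

Lemma ler_wsum_nonneg (R : numDomainType) (I : finType) (w x y : I -> R) :
  (forall i, 0 <= w i) -> (forall i, x i <= y i) ->
  \sum_i w i * x i <= \sum_i w i * y i.
Proof. by move=> w_ge0 le_xy; apply: ler_sum => i _; exact: ler_wpM2l. Qed.

Lemma dynamics_le (R : realType) (D Q : finType) (K S : nat)
    (h Lam : R) (eta rho : D -> Q -> R) (N0 Ninf : 'I_K -> Q -> R)
    (E1 E2 : D -> nat -> R) (P1 P2 : 'I_K -> Q -> nat -> R) :
  0 <= h -> Lam * h <= 1 -> (forall d q, 0 <= eta d q) ->
  dynamics S h Lam eta rho N0 Ninf E1 P1 ->
  dynamics S h Lam eta rho N0 Ninf E2 P2 ->
  (forall d s, (s <= S)%N -> E2 d s <= E1 d s) ->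
  forall k q s, (s <= S)%N -> P1 k q s <= P2 k q s.
Proof.
move=> h_ge0 Lamh_le1 eta_ge0 [init1 step1] [init2 step2] le_E k q.
elim=> [|s IHs] lt_sS; first by rewrite init1 init2.
rewrite (step1 _ _ _ lt_sS) (step2 _ _ _ lt_sS).
apply: euler_step_le => //; first exact: IHs (ltnW lt_sS).
apply: ler_wsum_nonneg => [d|d]; last exact: le_E (ltnW lt_sS).
by rewrite mulr_ge0 ?expR_ge0.
Qed.

Theorem theorem5 (R : realType) (D Q : finType) (K S : nat)
  (h Lam : R) (eta rho : D -> Q -> R) (N0 Ninf : 'I_K -> Q -> R)
  (Sol : Type) (feasible : Sol -> Prop)
  (Eof : Sol -> D -> nat -> R) (Pof : Sol -> 'I_K -> Q -> nat -> R)
  (hpos : 0 < h) (Lampos : 0 < Lam)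
  (etanonneg : forall d q, 0 <= eta d q)
  (N0pos : forall k q, 0 < N0 k q) (Ninfpos : forall k q, 0 < Ninf k q)
  (feas_dyn : forall x, feasible x ->
     dynamics S h Lam eta rho N0 Ninf (Eof x) (Pof x))
  (hLam : Lam * h <= 1)
  (x1 x2 : Sol) (f1 : feasible x1) (f2 : feasible x2)
  (hE : forall d s, (s <= S)%N -> Eof x2 d s <= Eof x1 d s) :
  forall q k, Pof x1 k q S <= Pof x2 k q S.
Proof.
move=> q k.
exact: dynamics_le (ltW hpos) hLam etanonneg (feas_dyn _ f1) (feas_dyn _ f2)
  hE k q S (leqnn S).
Qed.
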